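(* Let $\mathcal{D}=(\Omega,\mathcal{B})$ be a supersimple $2$-$(n,4,\lambda)$ design satisfying property $(\triangle)$, such that $(\Omega,\mathcal{C})$ is a regular two-graph where $\mathcal{C}$ is the set of collinear triples, and let $\mathcal{E}:=\{[a,b]\mid a,b\in\Omega\}$. Then $[x,y]^g=[x^g,y^g]$ for all $g\in\langle\mathcal{E}\rangle$ and all $x,y\in\Omega$.
   Context: A $2$-$(n,4,\lambda)$ design $(\Omega,\mathcal{B})$: $n$ points, a multiset of $4$-subsets (lines), every $2$-subset in exactly $\lambda$ lines; supersimple: distinct lines meet in at most two points. For distinct $a,b$ with lines $\{a,b,a_i,b_i\}$ through them, $[a,b]:=(a,b)\prod_i(a_i,b_i)\in\operatorname{Sym}(\Omega)$; $[a,a]:=1$. Permutations act on the right, products composed left to right, $g^h=h^{-1}gh$. Property $(\triangle)$: if $B_1,B_2\in\mathcal{B}$ with $|B_1\cap B_2|=2$ then $B_1\triangle B_2\in\mathcal{B}$. Regular two-graph: $(\Omega,\mathcal{C})$ is a $2$-$(n,3,\mu)$ design with every $4$-subset containing $0,2$ or $4$ members of $\mathcal{C}$. *)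

From mathcomp Require Import all_boot all_fingroup.
Set Implicit Arguments. Unset Strict Implicit. Unset Printing Implicit Defensive.
Local Open Scope group_scope.

Section Design.
Variable T : finType.

(* A block system is a multiset of blocks, represented as a sequence. *)
Definition is_2design_4 (B : seq {set T}) (lam : nat) : Prop :=
  (forall L, L \in B -> #|L| = 4) /\
  (forall a b : T, a != b ->
     count (fun L : {set T} => (a \in L) && (b \in L)) B = lam).

Definition supersimple (B : seq {set T}) : Prop :=
  forall i j, i < size B -> j < size B -> i != j ->
    #|nth set0 B i :&: nth set0 B j| <= 2.

Definition prop_triangle (B : seq {set T}) : Prop :=
  forall B1 B2, B1 \in B -> B2 \in B -> #|B1 :&: B2| = 2 ->
    (B1 :\: B2) :|: (B2 :\: B1) \in B.

Definition collinear_triples (B : seq {set T}) : {set {set T}} :=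
  [set S : {set T} | (#|S| == 3) && has (fun L : {set T} => S \subset L) B].

Definition regular_two_graph (C : {set {set T}}) : Prop :=
  (forall S, S \in C -> #|S| = 3) /\
  (exists mu : nat, forall a b : T, a != b ->
      #|[set S in C | (a \in S) && (b \in S)]| = mu) /\
  (forall F : {set T}, #|F| = 4 ->
      #|[set S in C | S \subset F]| \in [:: 0; 2; 4]%N).

Definition swap2 (d : T) (S : {set T}) : {perm T} :=
  let u := odflt d [pick z in S] in
  let v := odflt d [pick z in S :\ u] in
  tperm u v.

(* [a,b] := (a,b) * prod_i (a_i,b_i) over lines {a,b,a_i,b_i} through a,b;
   [a,a] := 1.  Permutations act on the right (mathcomp convention). *)
Definition brk (B : seq {set T}) (a b : T) : {perm T} :=
  if a == b then 1
  else tperm a b *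
       \prod_(L <- B | (a \in L) && (b \in L)) swap2 a (L :\: [set a; b]).

Definition brkset (B : seq {set T}) : {set {perm T}} :=
  [set brk B a b | a in T, b in T].

End Design.

From mathcomp Require Import all_boot all_fingroup.
Set Implicit Arguments. Unset Strict Implicit. Unset Printing Implicit Defensive.
Local Open Scope group_scope.

(* For a != b, the bracket [a,b] swaps a and b, fixes every point that is not
   collinear with a and b, and maps every other point z of a line through a
   and b to the fourth point of that line; these three properties determine
   it.  Any permutation with these properties maps lines to lines.  This is
   checked by cases on how a line meets {a,b} and the points collinear with a
   and b: property (triangle) produces the lines needed, and the two-graph
   condition (no 4-set carries exactly one or three collinear triples) forces
   the missing collinearities.  Hence <<E>> consists of automorphisms of the
   design, and an automorphism g carries the defining properties of [x,y] to
   those of [x^g,y^g]. *)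

Lemma leq_size_card (T : finType) (A : {set T}) (s : seq T) :
  uniq s -> {subset s <= A} -> size s <= #|A|.
Proof. by move=> us sA; rewrite -(card_uniqP us); apply/subset_leq_card/subsetP. Qed.

Lemma cards3_uniq (T : finType) (x y z : T) :
  uniq [:: x; y; z] -> #|[set x; y; z]| = 3.
Proof.
move=> U; rewrite -[3]/(size [:: x; y; z]) -(card_uniqP U).
by apply: eq_card => t; rewrite !inE orbA.
Qed.

Lemma card_set_count (T : finType) (s : seq T) (P : pred T) :
  uniq s -> #|[set w | (w \in s) && P w]| = count P s.
Proof.
move=> us; rewrite -size_filter -(card_uniqP (filter_uniq P us)).
by apply: eq_card => w; rewrite inE mem_filter andbC.
Qed.

Section Swap2.
Variables (T : finType) (d : T).

Lemma swap2E x y : x != y -> swap2 d [set x; y] = tperm x y.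
Proof.
move=> xy; rewrite /swap2 /=; case: pickP => [u|/(_ x)]; last by rewrite !inE eqxx.
rewrite !inE => /orP[]/eqP->.
- case: (pickP [pred z in [set x; y] :\ x]) => [w|/(_ y)] /=; last first.
    by rewrite !inE eqxx orbT eq_sym xy.
  rewrite !inE => /andP[wx /orP[]/eqP wE]; first by rewrite wE eqxx in wx.
  by rewrite wE.
- case: (pickP [pred z in [set x; y] :\ y]) => [w|/(_ x)] /=; last first.
    by rewrite !inE eqxx xy.
  rewrite !inE => /andP[wy /orP[]/eqP wE]; last by rewrite wE eqxx in wy.
  by rewrite wE tpermC.
Qed.

Lemma swap2_out (X : {set T}) z : #|X| = 2 -> z \notin X -> swap2 d X z = z.
Proof.
move/eqP/cards2P => [x [y [xy ->]]]; rewrite swap2E // !inE negb_or.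
by case/andP=> zx zy; rewrite tpermD // eq_sym.
Qed.

Lemma swap2_in (X : {set T}) z : #|X| = 2 -> z \in X ->
  swap2 d X z \in X /\ swap2 d X z != z.
Proof.
move/eqP/cards2P => [x [y [xy ->]]]; rewrite swap2E // !inE.
by case/orP=> /eqP->; rewrite ?tpermL ?tpermR eqxx ?orbT // ?(eq_sym y) ?xy.
Qed.

Lemma prod_swap2_out (s : seq {set T}) z :
  (forall X, X \in s -> #|X| = 2) -> (forall X, X \in s -> z \notin X) ->
  (\prod_(X <- s) swap2 d X) z = z.
Proof.
elim: s => [|Y s IH] c h; first by rewrite big_nil perm1.
rewrite big_cons permM swap2_out ?(c Y (mem_head _ _)) ?h ?mem_head //.
by apply: IH => X Xs; [apply: c|apply: h]; rewrite inE Xs orbT.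
Qed.

Lemma prod_swap2_in (s : seq {set T}) z X :
  (forall X, X \in s -> #|X| = 2) ->
  pairwise (fun X Y : {set T} => [disjoint X & Y]) s -> X \in s -> z \in X ->
  (\prod_(X <- s) swap2 d X) z = swap2 d X z.
Proof.
elim: s => // Y s IH c; rewrite pairwise_cons => /andP[/allP dY ps] XYs zX.
have cY := c Y (mem_head _ _).
have c' X' : X' \in s -> #|X'| = 2 by move=> Xs; apply: c; rewrite inE Xs orbT.
rewrite big_cons permM; have [zY|zY] := boolP (z \in Y).
  have EX : X = Y.
    move: XYs; rewrite inE => /orP[/eqP //|Xs].
    by have := disjointFr (dY X Xs) zY; rewrite zX.
  subst X; have [wY _] := swap2_in cY zY.
  by apply: prod_swap2_out => // X' Xs; rewrite (disjointFr (dY X' Xs) wY).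
rewrite swap2_out //; apply: IH => //; move: XYs; rewrite inE => /orP[/eqP E|//].
by subst X; rewrite zX in zY.
Qed.

End Swap2.

Section Design.
Variables (T : finType) (B : seq {set T}).
Hypothesis line_card : forall L, L \in B -> #|L| = 4.
Hypothesis lines_meet :
  forall L1 L2, L1 \in B -> L2 \in B -> L1 != L2 -> #|L1 :&: L2| <= 2.
Hypothesis uniqB : uniq B.
Hypothesis triangleB : prop_triangle B.
Hypothesis two_graphB : forall F : {set T}, #|F| = 4 ->
  #|[set S in collinear_triples B | S \subset F]| \in [:: 0; 2; 4]%N.

Definition collinear x y z :=
  has (fun L : {set T} => [&& x \in L, y \in L & z \in L]) B.

Definition collinear4 x y z w :=
  has (fun L : {set T} => [&& x \in L, y \in L, z \in L & w \in L]) B.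

Ltac split_andb :=
  repeat match goal with H : is_true (_ && _) |- _ => case/andP: H => ? ? end.

Ltac add_sym_neqs := repeat match goal with
  | H : is_true (?x != ?y) |- _ =>
    lazymatch goal with
    | _ : is_true (y != x) |- _ => fail
    | _ => have ? : y != x by rewrite eq_sym
    end
  end.

Ltac explode_uniq H :=
  let H' := fresh in
  move: (H) => /= H'; rewrite ?inE ?negb_or in H'; split_andb; add_sym_neqs.

Ltac solve_uniq :=
  add_sym_neqs; rewrite /= ?inE ?(inj_eq perm_inj);
  repeat match goal with
  | H : is_true (?x != ?y) |- context [?x == ?y] => rewrite (negbTE H)
  end; done.

Ltac same_line := match goal with
  | H : is_true (collinear4 _ _ _ _) |- is_true (collinear4 _ _ _ _) =>
    let L := fresh "L" in let LB := fresh in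
    case/hasP: (H) => L LB /and4P[? ? ? ?]; apply/hasP; exists L;
      [exact LB | apply/and4P; split; assumption]
  | H : is_true (collinear4 _ _ _ _) |- is_true (collinear _ _ _) =>
    let L := fresh "L" in let LB := fresh in
    case/hasP: (H) => L LB /and4P[? ? ? ?]; apply/hasP; exists L;
      [exact LB | apply/and3P; split; assumption]
  | H : is_true (collinear _ _ _) |- is_true (collinear _ _ _) =>
    let L := fresh "L" in let LB := fresh in
    case/hasP: (H) => L LB /and3P[? ? ?]; apply/hasP; exists L;
      [exact LB | apply/and3P; split; assumption]
  end.

Ltac by_incidence := try done; try same_line; try solve_uniq.

Lemma line_notin_fifth L u p q r s : L \in B -> uniq [:: u; p; q; r; s] ->
  p \in L -> q \in L -> r \in L -> s \in L -> u \notin L.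
Proof.
move=> LB us pL qL rL sL; apply/negP => uL.
have : size [:: u; p; q; r; s] <= #|L|.
  by apply: leq_size_card => // t; rewrite !inE => /or4P[|||/orP[]] /eqP->.
by rewrite line_card.
Qed.

Lemma eq_lines_of3 L1 L2 x y z : L1 \in B -> L2 \in B -> uniq [:: x; y; z] ->
  x \in L1 -> y \in L1 -> z \in L1 -> x \in L2 -> y \in L2 -> z \in L2 -> L1 = L2.
Proof.
move=> L1B L2B U x1 y1 z1 x2 y2 z2; apply/eqP; apply: contraT => ne.
have : size [:: x; y; z] <= #|L1 :&: L2|.
  by apply: (leq_size_card U) => t; rewrite !inE => /or3P[]/eqP->; apply/andP.
by move/leq_trans/(_ (lines_meet L1B L2B ne)).
Qed.

Lemma line_fourth_point L x y z : L \in B -> uniq [:: x; y; z] ->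
  x \in L -> y \in L -> z \in L -> exists2 w, w \in L & uniq [:: x; y; z; w].
Proof.
move=> LB U xL yL zL.
have : ~~ (L \subset [:: x; y; z]).
  by apply/negP => /subset_leq_card; rewrite line_card // (card_uniqP U).
case/subsetPn => w wL wn; exists w => //.
move: wn; rewrite !inE !negb_or => /and3P[wx wy wz]; explode_uniq U; solve_uniq.
Qed.

Lemma collinear4_symdiff x y u v w z :
  collinear4 x y u v -> collinear4 x y w z -> uniq [:: x; y; u; v; w; z] ->
  collinear4 u v w z.
Proof.
case/hasP=> L1 L1B /and4P[x1 y1 u1 v1]; case/hasP=> L2 L2B /and4P[x2 y2 w2 z2] U.
explode_uniq U.
have u2 : u \notin L2 by apply: (line_notin_fifth L2B _ x2 y2 w2 z2); solve_uniq.
have v2 : v \notin L2 by apply: (line_notin_fifth L2B _ x2 y2 w2 z2); solve_uniq.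
have w1 : w \notin L1 by apply: (line_notin_fifth L1B _ x1 y1 u1 v1); solve_uniq.
have z1 : z \notin L1 by apply: (line_notin_fifth L1B _ x1 y1 u1 v1); solve_uniq.
have ne : L1 != L2 by apply/eqP => E; move: u2; rewrite -E u1.
have meet2 : #|L1 :&: L2| = 2.
  apply/eqP; rewrite eqn_leq lines_meet //= -[2]/(size [:: x; y]).
  apply: leq_size_card; first by solve_uniq.
  by move=> t; rewrite !inE => /orP[]/eqP->; apply/andP.
apply/hasP; exists ((L1 :\: L2) :|: (L2 :\: L1)); first exact: triangleB.
by rewrite !inE u1 v1 w2 z2 (negbTE u2) (negbTE v2) (negbTE w1) (negbTE z1) /= ?orbT.
Qed.

Lemma collinearC x y z : collinear x y z = collinear y x z.
Proof. by apply/hasP/hasP => -[L LB /and3P[? ? ?]]; exists L => //; apply/and3P. Qed.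

Lemma collinearAC x y z : collinear x y z = collinear x z y.
Proof. by apply/hasP/hasP => -[L LB /and3P[? ? ?]]; exists L => //; apply/and3P. Qed.

Lemma collinear_triplesE x y z : uniq [:: x; y; z] ->
  ([set x; y; z] \in collinear_triples B) = collinear x y z.
Proof.
move=> U; rewrite inE cards3_uniq //=; apply: eq_has => L /=.
apply/subsetP/and3P => [sL|[? ? ?] t]; first by split; apply: sL; rewrite !inE eqxx ?orbT.
by rewrite !inE -orbA => /or3P[]/eqP->.
Qed.

Lemma card_collinear_triples S : S \in collinear_triples B -> #|S| = 3.
Proof. by rewrite inE => /andP[/eqP]. Qed.

(* A 3-subset of a 4-set F is F minus one point. *)
Lemma card_triples_sub (F : {set T}) : #|F| = 4 ->
  #|[set S in collinear_triples B | S \subset F]| =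
  #|[set w in F | F :\ w \in collinear_triples B]|.
Proof.
move=> F4; set W := [set w in F | _].
have injW : {in W &, injective (fun w => F :\ w)}.
  move=> w w'; rewrite !inE => /andP[wF _] /andP[w'F _] E; apply/eqP.
  apply: contraT => ww'; have : w' \in F :\ w by rewrite !inE eq_sym ww' w'F.
  by rewrite E !inE eqxx.
rewrite -(card_in_imset injW); apply: eq_card => S; rewrite [LHS]inE.
apply/andP/imsetP => [[SC SF]|[w]]; last first.
  by rewrite inE => /andP[wF wC] ->; rewrite wC subsetDl.
have /cards1P [w Ew] : #|F :\: S| == 1%N.
  by rewrite cardsD (setIidPr SF) F4 (card_collinear_triples SC).
have ES : S = F :\ w by rewrite -Ew setDDr setDv set0U (setIidPr SF).
have : w \in F :\: S by rewrite Ew set11.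
by rewrite inE => /andP[_ wF]; exists w; rewrite // inE wF -ES.
Qed.

Lemma two_graph_count p q r s : uniq [:: p; q; r; s] ->
  (collinear q r s + collinear p r s + collinear p q s + collinear p q r
     \in [:: 0; 2; 4])%N.
Proof.
move=> U; explode_uniq U; set F := [set p; q; r; s].
have F4 : #|F| = 4.
  rewrite -[4]/(size [:: p; q; r; s]) -(card_uniqP U).
  by apply: eq_card => t; rewrite !inE !orbA.
have FD x y z w : uniq [:: y; z; w] -> F :\ x = [set y; z; w] ->
    (F :\ x \in collinear_triples B) = collinear y z w.
  by move=> Uyzw ->; apply: collinear_triplesE.
move/two_graphB: (F4); rewrite card_triples_sub //.
have -> : [set w in F | F :\ w \in collinear_triples B] =
          [set w | (w \in [:: p; q; r; s]) && (F :\ w \in collinear_triples B)].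
  by apply/setP => t; rewrite /F !inE -!orbA.
rewrite (card_set_count (fun w => F :\ w \in collinear_triples B)) //= addn0 !addnA.
rewrite (FD p q r s) ?(FD q p r s) ?(FD r p q s) ?(FD s p q r) //;
  try solve_uniq; apply/setP => t; rewrite /F !inE;
  match goal with |- (?t != ?x) && _ = _ => case: (eqVneq t x) => [->|_] end;
  rewrite /= ?orbF //; solve_uniq.
Qed.

Lemma two_graph_no3 p q r s : uniq [:: p; q; r; s] ->
  collinear p q r -> collinear p q s -> collinear p r s -> collinear q r s.
Proof.
by move=> /two_graph_count + h1 h2 h3; rewrite h1 h2 h3; case: (collinear q r s).
Qed.

Lemma two_graph_no1 p q r s : uniq [:: p; q; r; s] ->
  collinear p q r -> ~~ collinear p q s -> collinear p r s || collinear q r s.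
Proof.
move=> /two_graph_count + h1 h2; rewrite h1 (negbTE h2).
by case: (collinear p r s); case: (collinear q r s).
Qed.

Definition bracket_spec a b (f : {perm T}) := [/\ a != b, f a = b, f b = a,
  forall z, z != a -> z != b -> ~~ collinear a b z -> f z = z &
  forall z, z != a -> z != b -> collinear a b z ->
    collinear4 a b z (f z) && uniq [:: a; b; z; f z]].

Lemma bracket_specC a b f : bracket_spec a b f -> bracket_spec b a f.
Proof.
case=> ab fa fb fN fS; split => //; first by rewrite eq_sym.
- by move=> z zb za; rewrite collinearC; apply: fN.
- move=> z zb za; rewrite collinearC => h; have /andP[M U] := fS z za zb h.
  by apply/andP; split; [same_line | explode_uniq U; solve_uniq].
Qed.

Section Bracket.
Variables (a b : T) (f : {perm T}).
Hypothesis fP : bracket_spec a b f.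

Lemma bracket_fix z : z != a -> z != b -> ~~ collinear a b z -> f z = z.
Proof. by case: fP => _ _ _ fN _; apply: fN. Qed.

Lemma bracket_line z : z != a -> z != b -> collinear a b z ->
  collinear4 a b z (f z) && uniq [:: a; b; z; f z].
Proof. by case: fP => _ _ _ _ fS; apply: fS. Qed.

Lemma bracket_fourth x y : collinear4 a b x y -> uniq [:: a; b; x; y] -> y = f x.
Proof.
move=> M U; explode_uniq U.
have /andP[Mf Uf] : collinear4 a b x (f x) && uniq [:: a; b; x; f x].
  by apply: bracket_line => //; same_line.
case/hasP: M => L LB /and4P[aL bL xL yL]; case/hasP: Mf => K KB /and4P[aK bK xK fK].
have EKL : K = L by apply: (eq_lines_of3 KB LB (x := a) (y := b) (z := x)) => //; solve_uniq.
apply/eqP; apply: contraT => ne; explode_uniq Uf.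
have := line_notin_fifth (u := f x) LB _ aL bL xL yL; rewrite -EKL fK; apply; solve_uniq.
Qed.

Lemma bracket_invol : involutive f.
Proof.
move=> x; have [_ fa fb _ _] := fP.
have [->|xa] := eqVneq x a; first by rewrite fa fb.
have [->|xb] := eqVneq x b; first by rewrite fb fa.
have [hx|hx] := boolP (collinear a b x); last by rewrite !bracket_fix.
have /andP[h U] := bracket_line xa xb hx; explode_uniq U.
by symmetry; apply: bracket_fourth; [same_line | solve_uniq].
Qed.

Lemma bracket_collinear z : z != a -> z != b -> collinear a b z ->
  [/\ collinear a b (f z), f z != a & f z != b].
Proof.
move=> za zb hz; have /andP[h U] := bracket_line za zb hz.
by explode_uniq U; split => //; same_line.
Qed.

Lemma bracket_notin_line p q r : collinear4 a p q r -> uniq [:: a; b; p; q; r] ->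
  collinear a b p -> q != f p.
Proof.
move=> h U hp; explode_uniq U.
have /andP[hl Ul] : collinear4 a b p (f p) && uniq [:: a; b; p; f p] by apply: bracket_line.
explode_uniq Ul.
case/hasP: h => M MB /and4P[aM pM qM rM].
have bM : b \notin M by apply: (line_notin_fifth MB _ aM pM qM rM); solve_uniq.
apply/eqP => E; subst q.
case/hasP: hl => L LB /and4P[aL bL pL fL].
have EM : M = L by apply: (eq_lines_of3 MB LB (x := a) (y := p) (z := f p)) => //; solve_uniq.
by rewrite EM bL in bM.
Qed.

(* In [image_line_ak] exactly k of the points p, q, r are collinear with a and b. *)
Lemma image_line_a0 p q r : collinear4 a p q r -> uniq [:: a; b; p; q; r] ->
  ~~ collinear a b p -> ~~ collinear a b q -> ~~ collinear a b r -> collinear4 b p q r.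
Proof.
move=> M U np nq nr; explode_uniq U.
have : collinear a q b || collinear p q b.
  by apply: two_graph_no1; [solve_uniq|same_line|rewrite collinearAC].
case/orP => [h|h]; first by rewrite collinearAC h in nq.
case/hasP: h => K KB /and3P[pK qK bK].
have [w wK Uw] := line_fourth_point KB (x := b) (y := p) (z := q) ltac:(solve_uniq) bK pK qK.
explode_uniq Uw.
have K4 : collinear4 b p q w by apply/hasP; exists K => //; apply/and4P.
have [<-|wr] := eqVneq w r; first by same_line.
have wa : w != a by apply: contraNneq np => wa; rewrite wa in K4; same_line.
have h : collinear4 b w a r by apply: (collinear4_symdiff (x := p) (y := q)); by_incidence.
by case/negP: nr; same_line.
Qed.

Lemma image_line_a1 p q r : collinear4 a p q r -> uniq [:: a; b; p; q; r] ->
  collinear a b p -> ~~ collinear a b q -> ~~ collinear a b r -> collinear4 b (f p) q r.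
Proof.
move=> M U hp nq nr; explode_uniq U.
have /andP[hl Ul] : collinear4 a b p (f p) && uniq [:: a; b; p; f p] by apply: bracket_line.
have [hfp _ _] : [/\ collinear a b (f p), f p != a & f p != b] by apply: bracket_collinear.
have n1 : f p != q by apply: contraTneq hfp => ->.
have n2 : f p != r by apply: contraTneq hfp => ->.
explode_uniq Ul.
have h : collinear4 q r b (f p) by apply: (collinear4_symdiff (x := a) (y := p)); by_incidence.
same_line.
Qed.

Lemma image_line_a3 p q r : collinear4 a p q r -> uniq [:: a; b; p; q; r] ->
  collinear a b p -> collinear a b q -> collinear a b r -> collinear4 b (f p) (f q) (f r).
Proof.
move=> M U hp hq hr; explode_uniq U.
have /andP[lp Up] : collinear4 a b p (f p) && uniq [:: a; b; p; f p] by apply: bracket_line.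
have /andP[lq Uq] : collinear4 a b q (f q) && uniq [:: a; b; q; f q] by apply: bracket_line.
have /andP[lr Ur] : collinear4 a b r (f r) && uniq [:: a; b; r; f r] by apply: bracket_line.
explode_uniq Up; explode_uniq Uq; explode_uniq Ur.
have d1 : q != f p by apply: (bracket_notin_line (r := r)).
have d2 : r != f p by apply: (bracket_notin_line (r := q)); by_incidence.
have d3 : p != f q by apply: (bracket_notin_line (r := r)); by_incidence.
have d4 : r != f q by apply: (bracket_notin_line (r := p)); by_incidence.
have d5 : p != f r by apply: (bracket_notin_line (r := q)); by_incidence.
have d6 : q != f r by apply: (bracket_notin_line (r := p)); by_incidence.
have s1 : collinear4 q r b (f p)
  by apply: (collinear4_symdiff (x := a) (y := p)); by_incidence.
have s2 : collinear4 (f p) r a (f q)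
  by apply: (collinear4_symdiff (x := b) (y := q)); by_incidence.
have s3 : collinear4 (f p) (f q) b (f r)
  by apply: (collinear4_symdiff (x := a) (y := r)); by_incidence.
same_line.
Qed.

Lemma image_line_a2 p q r : collinear4 a p q r -> uniq [:: a; b; p; q; r] ->
  collinear a b p -> collinear a b q -> ~~ collinear a b r -> collinear4 b (f p) (f q) r.
Proof.
move=> M U hp hq nr; explode_uniq U.
have /andP[lp Up] : collinear4 a b p (f p) && uniq [:: a; b; p; f p] by apply: bracket_line.
have /andP[lq Uq] : collinear4 a b q (f q) && uniq [:: a; b; q; f q] by apply: bracket_line.
have [hfp _ _] : [/\ collinear a b (f p), f p != a & f p != b] by apply: bracket_collinear.
have [hfq _ _] : [/\ collinear a b (f q), f q != a & f q != b] by apply: bracket_collinear.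
have n1 : f p != r by apply: contraTneq hfp => ->.
have n2 : f q != r by apply: contraTneq hfq => ->.
explode_uniq Up; explode_uniq Uq.
have d1 : q != f p by apply: (bracket_notin_line (r := r)).
have d3 : p != f q by apply: (bracket_notin_line (r := r)); by_incidence.
have s1 : collinear4 q r b (f p)
  by apply: (collinear4_symdiff (x := a) (y := p)); by_incidence.
have s2 : collinear4 (f p) r a (f q)
  by apply: (collinear4_symdiff (x := b) (y := q)); by_incidence.
have s3 : collinear4 p r b (f q)
  by apply: (collinear4_symdiff (x := a) (y := q)); by_incidence.
have : collinear b (f p) (f q)
  by apply: (two_graph_no3 (p := r)); [solve_uniq|same_line|same_line|same_line].
case/hasP => K KB /and3P[bK pK qK].
have [w wK Uw] :=
  line_fourth_point KB (x := b) (y := f p) (z := f q) ltac:(solve_uniq) bK pK qK.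
explode_uniq Uw.
have K4 : collinear4 b (f p) (f q) w by apply/hasP; exists K => //; apply/and4P.
have [<-|wr] := eqVneq w r; first by same_line.
have wa : w != a.
  apply: contra_neq d1 => wa; rewrite wa in K4.
  have e : f q = f (f p) by apply: bracket_fourth; by_incidence.
  by rewrite -[q]bracket_invol e bracket_invol.
have h : collinear4 b w a r
  by apply: (collinear4_symdiff (x := f p) (y := f q)); by_incidence.
by case/negP: nr; same_line.
Qed.

Lemma image_line_a p q r : collinear4 a p q r -> uniq [:: a; b; p; q; r] ->
  collinear4 b (f p) (f q) (f r).
Proof.
move=> M U; explode_uniq U.
case: (boolP (collinear a b p)) => hp; case: (boolP (collinear a b q)) => hq;
  case: (boolP (collinear a b r)) => hr;
  rewrite ?(bracket_fix _ _ hp) ?(bracket_fix _ _ hq) ?(bracket_fix _ _ hr) //.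
- exact: image_line_a3.
- exact: image_line_a2.
- have h : collinear4 b (f p) (f r) q by apply: image_line_a2; by_incidence.
  same_line.
- exact: image_line_a1.
- have h : collinear4 b (f q) (f r) p by apply: image_line_a2; by_incidence.
  same_line.
- have h : collinear4 b (f q) p r by apply: image_line_a1; by_incidence.
  same_line.
- have h : collinear4 b (f r) p q by apply: image_line_a1; by_incidence.
  same_line.
- exact: image_line_a0.
Qed.

Lemma image_line_ab r s : collinear4 a b r s -> uniq [:: a; b; r; s] ->
  collinear4 b a (f r) (f s).
Proof.
move=> h U; have e := bracket_fourth h U.
have -> : f s = r by rewrite e bracket_invol.
rewrite -e; same_line.
Qed.

Lemma image_line_through_a q r s : collinear4 a q r s -> uniq [:: a; q; r; s] ->
  collinear4 b (f q) (f r) (f s).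
Proof.
move=> M U; have [ab _ fb _ _] := fP; explode_uniq U.
case: (q =P b) => [E|/eqP qb]; first by subst q; rewrite fb; apply: image_line_ab.
case: (r =P b) => [E|/eqP rb].
  subst r; rewrite fb.
  have h : collinear4 b a (f q) (f s)
    by apply: image_line_ab; by_incidence.
  same_line.
case: (s =P b) => [E|/eqP sb].
  subst s; rewrite fb.
  have h : collinear4 b a (f q) (f r)
    by apply: image_line_ab; by_incidence.
  same_line.
by apply: image_line_a; by_incidence.
Qed.

Lemma image_line_via_a x y u v : collinear4 x y u v -> uniq [:: a; b; x; y; u; v] ->
  collinear a x y ->
  ~~ collinear a b y -> collinear4 (f x) (f y) (f u) (f v).
Proof.
move=> M U hN ny; have [ab fa fb _ _] := fP; explode_uniq U.
case/hasP: hN => N NB /and3P[aN xN yN].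
have [w wN Uw] := line_fourth_point NB (x := a) (y := x) (z := y) ltac:(solve_uniq) aN xN yN.
explode_uniq Uw.
have wb : w != b.
  apply/eqP => E; subst w; have : collinear a b y by apply/hasP; exists N => //; apply/and3P.
  by rewrite (negbTE ny).
case/hasP: (M) => L LB /and4P[xL yL uL vL].
have aL : a \notin L by apply: (line_notin_fifth LB _ xL yL uL vL); solve_uniq.
have wu : w != u.
  apply/eqP => E; subst w.
  have : N = L by apply: (eq_lines_of3 NB LB (x := x) (y := y) (z := u)) => //; solve_uniq.
  by move=> E; rewrite -E aN in aL.
have wv : w != v.
  apply/eqP => E; subst w.
  have : N = L by apply: (eq_lines_of3 NB LB (x := x) (y := y) (z := v)) => //; solve_uniq.
  by move=> E; rewrite -E aN in aL.
have N4 : collinear4 a x y w by apply/hasP; exists N => //; apply/and4P.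
have M2 : collinear4 a w u v by apply: (collinear4_symdiff (x := x) (y := y)); by_incidence.
have h1 : collinear4 b (f x) (f y) (f w) by apply: image_line_a; by_incidence.
have h2 : collinear4 b (f w) (f u) (f v) by apply: image_line_a; by_incidence.
have Uf : uniq [:: b; f w; f x; f y; f u; f v].
  rewrite -fa; have := map_inj_uniq (@perm_inj _ f) [:: a; w; x; y; u; v]; rewrite /= => ->.
  solve_uniq.
apply: (collinear4_symdiff (x := b) (y := f w)); by_incidence.
Qed.

Lemma image_line_pair x y u v : collinear4 x y u v -> uniq [:: a; b; x; y; u; v] ->
  collinear a b x -> y = f x ->
  collinear4 (f x) (f y) (f u) (f v).
Proof.
move=> M U hx e; have [ab _ _ _ _] := fP; explode_uniq U.
have /andP[lx Ux] : collinear4 a b x (f x) && uniq [:: a; b; x; f x] by apply: bracket_line.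
rewrite -e in lx.
have h : collinear4 u v a b by apply: (collinear4_symdiff (x := x) (y := y)); by_incidence.
have e2 : v = f u by apply: bracket_fourth; by_incidence.
rewrite -e e2 bracket_invol -e2 e bracket_invol -e; same_line.
Qed.

Lemma image_line_nopair p q r s : collinear4 p q r s -> uniq [:: a; b; p; q; r; s] ->
  collinear a b p -> collinear a b q -> collinear a b r -> collinear a b s ->
  f p != q -> f p != r -> f p != s -> f q != r -> f q != s -> f r != s ->
  collinear4 (f p) (f q) (f r) (f s).
Proof.
move=> M U hp hq hr hs d1 d2 d3 d4 d5 d6; explode_uniq U.
have /andP[lp Up] : collinear4 a b p (f p) && uniq [:: a; b; p; f p] by apply: bracket_line.
have /andP[lq Uq] : collinear4 a b q (f q) && uniq [:: a; b; q; f q] by apply: bracket_line.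
have /andP[lr Ur] : collinear4 a b r (f r) && uniq [:: a; b; r; f r] by apply: bracket_line.
have /andP[ls Us] : collinear4 a b s (f s) && uniq [:: a; b; s; f s] by apply: bracket_line.
explode_uniq Up; explode_uniq Uq; explode_uniq Ur; explode_uniq Us.
have e1 : f q != p by apply: contra d1 => /eqP <-; rewrite bracket_invol.
have e2 : f r != p by apply: contra d2 => /eqP <-; rewrite bracket_invol.
have e3 : f r != q by apply: contra d4 => /eqP <-; rewrite bracket_invol.
have e4 : f s != p by apply: contra d3 => /eqP <-; rewrite bracket_invol.
have e5 : f s != q by apply: contra d5 => /eqP <-; rewrite bracket_invol.
have e6 : f s != r by apply: contra d6 => /eqP <-; rewrite bracket_invol.
have s1 : collinear4 p (f p) q (f q)
  by apply: (collinear4_symdiff (x := a) (y := b)); by_incidence.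
have s2 : collinear4 r s (f p) (f q)
  by apply: (collinear4_symdiff (x := p) (y := q)); by_incidence.
have s3 : collinear4 r (f r) s (f s)
  by apply: (collinear4_symdiff (x := a) (y := b)); by_incidence.
have s4 : collinear4 r s (f r) (f s) by same_line.
apply: (collinear4_symdiff (x := r) (y := s)); by_incidence.
Qed.

Lemma image_line_all p q r s : collinear4 p q r s -> uniq [:: a; b; p; q; r; s] ->
  collinear a b p -> collinear a b q -> collinear a b r -> collinear a b s ->
  collinear4 (f p) (f q) (f r) (f s).
Proof.
move=> M U hp hq hr hs; explode_uniq U.
case: (f p =P q) => [E|/eqP d1]; first by apply: image_line_pair; rewrite ?E.
case: (f p =P r) => [E|/eqP d2].
  have h : collinear4 (f p) (f r) (f q) (f s) by apply: image_line_pair; by_incidence.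
  same_line.
case: (f p =P s) => [E|/eqP d3].
  have h : collinear4 (f p) (f s) (f q) (f r) by apply: image_line_pair; by_incidence.
  same_line.
case: (f q =P r) => [E|/eqP d4].
  have h : collinear4 (f q) (f r) (f p) (f s) by apply: image_line_pair; by_incidence.
  same_line.
case: (f q =P s) => [E|/eqP d5].
  have h : collinear4 (f q) (f s) (f p) (f r) by apply: image_line_pair; by_incidence.
  same_line.
case: (f r =P s) => [E|/eqP d6].
  have h : collinear4 (f r) (f s) (f p) (f q) by apply: image_line_pair; by_incidence.
  same_line.
exact: image_line_nopair.
Qed.

End Bracket.

Lemma image_line_mixed a b f x y u v : bracket_spec a b f -> collinear4 x y u v ->
  uniq [:: a; b; x; y; u; v] ->
  collinear a b x -> ~~ collinear a b y -> collinear4 (f x) (f y) (f u) (f v).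
Proof.
move=> fP M U hx ny; explode_uniq U.
have : collinear a x y || collinear b x y by apply: two_graph_no1; by_incidence.
case/orP => h; first exact: (image_line_via_a fP).
apply: (image_line_via_a (bracket_specC fP)) => //; first solve_uniq.
by rewrite collinearC.
Qed.

Lemma image_line_avoiding a b f p q r s : bracket_spec a b f -> collinear4 p q r s ->
  uniq [:: a; b; p; q; r; s] ->
  collinear4 (f p) (f q) (f r) (f s).
Proof.
move=> fP M U; explode_uniq U.
case: (boolP (collinear a b p)) => hp.
  case: (boolP (collinear a b q)) => hq; last exact: (image_line_mixed fP).
  case: (boolP (collinear a b r)) => hr.
    case: (boolP (collinear a b s)) => hs; first exact: (image_line_all fP).
    have h : collinear4 (f p) (f s) (f q) (f r) by apply: (image_line_mixed fP); by_incidence.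
    same_line.
  have h : collinear4 (f p) (f r) (f q) (f s) by apply: (image_line_mixed fP); by_incidence.
  same_line.
case: (boolP (collinear a b q)) => hq.
  have h : collinear4 (f q) (f p) (f r) (f s) by apply: (image_line_mixed fP); by_incidence.
  same_line.
case: (boolP (collinear a b r)) => hr.
  have h : collinear4 (f r) (f p) (f q) (f s) by apply: (image_line_mixed fP); by_incidence.
  same_line.
case: (boolP (collinear a b s)) => hs.
  have h : collinear4 (f s) (f p) (f q) (f r) by apply: (image_line_mixed fP); by_incidence.
  same_line.
by rewrite !(bracket_fix fP).
Qed.

Lemma bracket_image_line a b f p q r s : bracket_spec a b f ->
  collinear4 p q r s -> uniq [:: p; q; r; s] -> collinear4 (f p) (f q) (f r) (f s).
Proof.
move=> fP M U; explode_uniq U; have [ab fa fb _ _] := fP.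
have through_ab x y z w : x \in [:: a; b] -> collinear4 x y z w -> uniq [:: x; y; z; w] ->
    collinear4 (f x) (f y) (f z) (f w).
  rewrite !inE => /orP[]/eqP->; [rewrite fa | rewrite fb]; apply: image_line_through_a => //.
  exact: bracket_specC.
have [|miss] := boolP (has [in [:: a; b]] [:: p; q; r; s]); last first.
  move: miss; rewrite /= !inE !negb_or => miss; split_andb.
  by apply: (image_line_avoiding fP); by_incidence.
case/hasP => x + h; rewrite !inE => /or4P[]/eqP xE; subst x; first exact: through_ab.
- have h4 : collinear4 (f q) (f p) (f r) (f s) by apply: through_ab; by_incidence.
  same_line.
- have h4 : collinear4 (f r) (f p) (f q) (f s) by apply: through_ab; by_incidence.
  same_line.
- have h4 : collinear4 (f s) (f p) (f q) (f r) by apply: through_ab; by_incidence.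
  same_line.
Qed.

Section LinesThrough.
Variables a b : T.
Hypothesis ab : a != b.

Let pairs :=
  [seq L :\: [set a; b] | L : {set T} <- [seq L : {set T} <- B | (a \in L) && (b \in L)]].

Lemma brkE : brk B a b = tperm a b * \prod_(X <- pairs) swap2 a X.
Proof. by rewrite /brk (negbTE ab) big_map big_filter. Qed.

Lemma pairsP X : X \in pairs ->
  exists2 L, L \in B & [/\ a \in L, b \in L & X = L :\: [set a; b]].
Proof. by case/mapP => L; rewrite mem_filter => /andP[/andP[aL bL] LB] ->; exists L. Qed.

Lemma card_pairs X : X \in pairs -> #|X| = 2.
Proof.
case/pairsP => L LB [aL bL ->]; rewrite cardsD line_card //.
rewrite (setIidPr _) ?cards2 ?ab //.
by apply/subsetP => t; rewrite !inE => /orP[]/eqP->.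
Qed.

Lemma disjoint_pairs : pairwise (fun X Y : {set T} => [disjoint X & Y]) pairs.
Proof.
rewrite pairwise_map; set through := [seq L <- B | _].
apply: (@sub_in_pairwise _ [in through] [rel L1 L2 | L1 != L2]) (allss _) _; last first.
  by rewrite -uniq_pairwise filter_uniq.
move=> L1 L2; rewrite !mem_filter => /andP[/andP[a1 b1] L1B] /andP[/andP[a2 b2] L2B] /= ne.
rewrite -setI_eq0; apply/eqP/setP => t; rewrite !inE.
apply/negP => /andP[/andP[tab t1] /andP[_ t2]]; move: tab; rewrite negb_or => /andP[ta tb].
have : size [:: a; b; t] <= #|L1 :&: L2|.
  apply: leq_size_card; first by rewrite /= !inE negb_or ab eq_sym ta eq_sym tb.
  by move=> u; rewrite !inE => /or3P[]/eqP->; rewrite ?a1 ?a2 ?b1 ?b2 ?t1 ?t2.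
by move/leq_trans/(_ (lines_meet L1B L2B ne)).
Qed.

Lemma brk_spec : bracket_spec a b (brk B a b).
Proof.
have pairs_ab X : X \in pairs -> (a \notin X) && (b \notin X).
  by case/pairsP => L _ [_ _ ->]; rewrite !inE !eqxx /= orbT.
split => //.
- rewrite brkE permM tpermL prod_swap2_out //; first exact: card_pairs.
  by move=> X /pairs_ab /andP[].
- rewrite brkE permM tpermR prod_swap2_out //; first exact: card_pairs.
  by move=> X /pairs_ab /andP[].
- move=> z za zb nz; rewrite brkE permM tpermD 1?eq_sym //.
  apply: prod_swap2_out; first exact: card_pairs.
  move=> X /pairsP [L LB [aL bL ->]]; rewrite !inE negb_and negbK.
  by apply/orP; right; apply: contra nz => zL; apply/hasP; exists L; rewrite ?aL ?bL.
- move=> z za zb /hasP[L LB /and3P[aL bL zL]].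
  have Xs : L :\: [set a; b] \in pairs by apply: map_f; rewrite mem_filter aL bL LB.
  have zX : z \in L :\: [set a; b] by rewrite !inE negb_or za zb.
  rewrite brkE permM tpermD 1?eq_sym // (prod_swap2_in _ card_pairs disjoint_pairs Xs zX).
  have [] := swap2_in a (card_pairs Xs) zX.
  rewrite !inE negb_or => /andP[/andP[wa wb] wL] wz.
  apply/andP; split; first by apply/hasP; exists L; rewrite ?aL ?bL ?zL.
  by rewrite /= !inE !negb_or ab (eq_sym a z) za (eq_sym b z) zb (eq_sym a) wa
     (eq_sym b) wb eq_sym wz.
Qed.

End LinesThrough.

Definition aut_design :=
  [set g : {perm T} | all (fun L : {set T} => [set g x | x in L] \in B) B].

Lemma aut_design_group_set : group_set aut_design.
Proof.
apply/group_setP; split.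
  by rewrite inE; apply/allP => L LB; rewrite (eq_imset _ (@perm1 T)) imset_id.
move=> g h; rewrite !inE => /allP gB /allP hB; apply/allP => L LB.
rewrite (eq_imset _ (permM g h)) imset_comp; exact/hB/gB.
Qed.

Canonical aut_design_group := Group aut_design_group_set.

Lemma bracket_spec_aut a b f : bracket_spec a b f -> f \in aut_design.
Proof.
move=> fP; rewrite inE; apply/allP => M MB.
have mE x : (x \in M) = (x \in enum M) by rewrite mem_enum.
have : size (enum M) = 4 by rewrite -cardE line_card.
have := enum_uniq M; move: mE.
case: (enum M) => [|p [|q [|r [|s [|? ?]]]]] //= mE U _.
have M4 : collinear4 p q r s by apply/hasP; exists M; rewrite // !mE !inE !eqxx ?orbT.
case/hasP: (bracket_image_line fP M4 U) => L LB /and4P[pL qL rL sL].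
suff -> : [set f x | x in M] = L by [].
apply/eqP; rewrite eqEcard card_imset; last exact: perm_inj.
rewrite line_card // -(line_card MB) leqnn andbT.
by apply/subsetP => y /imsetP[x]; rewrite mE !inE => /or4P[]/eqP-> ->.
Qed.

Lemma collinear_aut g x y z : g \in aut_design ->
  collinear (g x) (g y) (g z) = collinear x y z.
Proof.
have imB h u v t : h \in aut_design -> collinear u v t -> collinear (h u) (h v) (h t).
  rewrite inE => /allP hB /hasP[L LB /and3P[uL vL tL]].
  by apply/hasP; exists [set h w | w in L]; rewrite ?hB ?imset_f.
move=> gA; apply/idP/idP; last exact: imB.
by move/(imB _ _ _ _ (groupVr gA)); rewrite !permK.
Qed.

Lemma collinear4_aut g x y z w : g \in aut_design ->
  collinear4 x y z w -> collinear4 (g x) (g y) (g z) (g w).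
Proof.
rewrite inE => /allP gB /hasP[L LB /and4P[xL yL zL wL]].
by apply/hasP; exists [set g t | t in L]; rewrite ?gB ?imset_f.
Qed.

Lemma bracket_spec_conj g a b f : g \in aut_design -> bracket_spec a b f ->
  bracket_spec (g a) (g b) (f ^ g).
Proof.
move=> gA [ab fa fb fN fS].
have conjE z : (f ^ g) (g z) = g (f z) by rewrite conjgE !permM permK.
split; rewrite ?conjE ?fa ?fb ?(inj_eq perm_inj) // => z';
  rewrite -[z'](permKV g) !(inj_eq perm_inj) collinear_aut // conjE => za zb hz.
  by rewrite fN.
have /andP[M U] := fS _ za zb hz; explode_uniq U.
by rewrite collinear4_aut //; solve_uniq.
Qed.

Lemma bracket_spec_uniq a b f f' :
  bracket_spec a b f -> bracket_spec a b f' -> f = f'.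
Proof.
move=> fP [_ fa' fb' fN' fS']; have [_ fa fb fN _] := fP; apply/permP => z.
have [->|za] := eqVneq z a; first by rewrite fa fa'.
have [->|zb] := eqVneq z b; first by rewrite fb fb'.
have [hz|hz] := boolP (collinear a b z); last by rewrite fN ?fN'.
by have /andP[M U] := fS' z za zb hz; rewrite -(bracket_fourth fP M U).
Qed.

Lemma brk_conj g x y : g \in aut_design -> brk B x y ^ g = brk B (g x) (g y).
Proof.
move=> gA; have [<-|xy] := eqVneq x y; first by rewrite /brk !eqxx conj1g.
apply: bracket_spec_uniq (bracket_spec_conj gA (brk_spec xy)) _.
by apply: brk_spec; rewrite (inj_eq perm_inj).
Qed.

Lemma gen_brkset_aut : <<brkset B>> \subset aut_design.
Proof.
rewrite gen_subG; apply/subsetP => _ /imset2P[a b _ _ ->].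
have [<-|ab] := eqVneq a b; first by rewrite /brk eqxx group1.
exact: bracket_spec_aut (brk_spec ab).
Qed.

End Design.

Lemma supersimple_uniq (T : finType) (B : seq {set T}) :
  (forall L, L \in B -> #|L| = 4) -> supersimple B -> uniq B.
Proof.
move=> line_card ss; apply: contraT => /(uniqPn set0) [i [j [ij jB E]]].
have iB : i < size B by apply: ltn_trans jB.
by have := ss i j iB jB (negbT (ltn_eqF ij)); rewrite E setIid line_card // mem_nth.
Qed.

Lemma supersimple_meet (T : finType) (B : seq {set T}) : supersimple B ->
  forall L1 L2, L1 \in B -> L2 \in B -> L1 != L2 -> #|L1 :&: L2| <= 2.
Proof.
move=> ss L1 L2 L1B L2B ne.
have := ss (index L1 B) (index L2 B); rewrite !index_mem !nth_index //; apply => //.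
by apply: contra ne => /eqP E; rewrite -(nth_index set0 L1B) E nth_index.
Qed.

Unset Implicit Arguments.

Theorem lemma4p6 (T : finType) (B : seq {set T}) (lam : nat) :
  is_2design_4 B lam ->
  supersimple B ->
  prop_triangle B ->
  regular_two_graph (collinear_triples B) ->
  forall g : {perm T}, g \in <<brkset B>> ->
  forall x y : T, brk B x y ^ g = brk B (g x) (g y).
Proof.
move=> [line_card _] ss triangleB [_ [_ two_graphB]] g gE x y.
have lines_meet := supersimple_meet ss.
have uniqB := supersimple_uniq line_card ss.
apply: (brk_conj line_card lines_meet uniqB).
exact: subsetP (gen_brkset_aut line_card lines_meet uniqB triangleB two_graphB) g gE.
Qed.
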